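(* Let $V$ be a vector space of dimension $n$ over a field $\mathcal{F}$, let $\Lambda=(\lambda_{i,j})_{i,j=1,\dots,n}$ be an $n\times n$ matrix all of whose entries are non-zero elements of $\mathcal{F}$, and let $\mathcal{V}=(v_1,\dots,v_n)$ be a basis of $V$. Let $\phi:V\to V$ be a map (not assumed linear) such that for every $v,w\in V$ there is an endomorphism $\phi_{v,w}$ of $V$ which is $\Lambda$-symmetric with respect to $\mathcal{V}$ and satisfies $\phi(v)=\phi_{v,w}(v)$ and $\phi(w)=\phi_{v,w}(w)$. Then $\phi$ is linear.
   Context: For a linear map $\psi:V\to V$, its matrix with respect to $\mathcal{V}$ is $(x_{i,j})_{i,j=1}^n$ where $\psi(v_j)=\sum_{i=1}^n x_{i,j}v_i$. An endomorphism $\psi$ is called $\Lambda$-symmetric with respect to $\mathcal{V}$ if its matrix with respect to $\mathcal{V}$ has the form $(\lambda_{i,j}a_{i,j})_{i,j=1}^n$ for some symmetric matrix $A=(a_{i,j})$ (i.e. $a_{i,j}=a_{j,i}$ for all $i,j$). *)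

From mathcomp Require Import all_boot all_order all_algebra.
Set Implicit Arguments. Unset Strict Implicit. Unset Printing Implicit Defensive.
Import GRing.Theory.
Local Open Scope ring_scope.

Definition mat_of_end (F : fieldType) (V : vectType F) (n : nat)
  (B : n.-tuple V) (psi : 'End(V)) : 'M[F]_n :=
  \matrix_(i < n, j < n) coord B i (psi (B`_j)).

Definition Lambda_symmetric (F : fieldType) (V : vectType F) (n : nat)
  (Lam : 'M[F]_n) (B : n.-tuple V) (psi : 'End(V)) : Prop :=
  exists A : 'M[F]_n, A^T = A /\
    mat_of_end B psi = \matrix_(i < n, j < n) (Lam i j * A i j).

From mathcomp Require Import all_boot all_order all_algebra.
Import GRing.Theory.
Set Implicit Arguments.
Unset Strict Implicit.
Unset Printing Implicit Defensive.
Local Open Scope ring_scope.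

(* Writing ψ(v_j)_i = λ_ij a_ij with a symmetric gives
   ψ(v_j)_i = (λ_ij / λ_ji) ψ(v_i)_j, so the i-th coordinate of
   ψ(v) = Σ_j v^j ψ(v_j) is a linear form in v whose coefficients depend only
   on ψ(v_i). Applying this to ψ_{v,v_i} shows that every coordinate of φ(v) is
   a fixed linear form in v, with coefficients read off from φ(v_i); hence φ is
   linear. *)

Section LambdaSymmetric.

Variables (F : fieldType) (V : vectType F) (n : nat).
Variables (Lam : 'M[F]_n) (B : n.-tuple V).
Hypothesis hLam : forall i j, Lam i j != 0.

Lemma Lambda_symmetric_coord (psi : 'End(V)) (i j : 'I_n) :
  Lambda_symmetric Lam B psi ->
  coord B i (psi B`_j) = Lam i j / Lam j i * coord B j (psi B`_i).
Proof.
move=> [A [AT hM]].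
have entry (k l : 'I_n) : coord B k (psi B`_l) = Lam k l * A k l.
  by have := congr1 (fun M : 'M[F]_n => M k l) hM; rewrite !mxE.
have A_sym : A j i = A i j.
  by have := congr1 (fun M : 'M[F]_n => M i j) AT; rewrite !mxE.
by rewrite !entry A_sym -mulrA mulKf.
Qed.

Hypothesis hB : basis_of fullv B.

Lemma Lambda_symmetric_coordE (psi : 'End(V)) v (k : 'I_n) :
  Lambda_symmetric Lam B psi ->
  coord B k (psi v) =
    \sum_j (Lam k j / Lam j k * coord B j (psi B`_k)) * coord B j v.
Proof.
move=> psi_sym.
rewrite {1}(coord_basis hB (memvf v)) !linear_sum /=.
apply: eq_bigr => j _.
by rewrite !linearZ /= (Lambda_symmetric_coord k j psi_sym) mulrC.
Qed.

Lemma linear_of_coord_linear (f : V -> V) (c : 'I_n -> 'I_n -> F) :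
  (forall v k, coord B k (f v) = \sum_j c k j * coord B j v) -> linear f.
Proof.
move=> fE a u w.
rewrite (coord_basis hB (memvf (f (a *: u + w)))).
rewrite [RHS](coord_basis hB (memvf (a *: f u + f w))).
apply: eq_bigr => k _; congr (_ *: _).
rewrite fE linearD linearZ /= !fE mulr_sumr -big_split /=.
by apply: eq_bigr => j _; rewrite linearD linearZ /= mulrDr mulrCA.
Qed.

End LambdaSymmetric.

Theorem theorem2p3 (F : fieldType) (V : vectType F) (n : nat)
  (hdim : \dim (fullv : {vspace V}) = n)
  (Lam : 'M[F]_n) (hLam : forall i j, Lam i j != 0)
  (B : n.-tuple V) (hB : basis_of fullv B)
  (phi : V -> V)
  (hphi : forall v w : V, exists psi : 'End(V),
      Lambda_symmetric Lam B psi /\ phi v = psi v /\ phi w = psi w) :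
  linear phi.
Proof.
apply: (linear_of_coord_linear hB
  (c := fun k j => Lam k j / Lam j k * coord B j (phi B`_k))) => v k.
have [psi [psi_sym [-> ->]]] := hphi v B`_k.
exact: Lambda_symmetric_coordE.
Qed.
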